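(* Consider Algorithm 1 applied to $\min\varphi(w)$ s.t. $w\in D$, assume the inner loop always terminates, and let $\{w^j\}$ be the resulting infinite sequence of outer iterates. Assume that $\varphi$ is bounded from below and uniformly continuous on $\mathcal S_\varphi(w^0):=\{w\in D:\varphi(w)\le\varphi(w^0)\}$. Let $\bar w$ be an accumulation point of $\{w^j\}$, with $w^j\to\bar w$ along a subsequence $K$. Then $\bar w$ is an M-stationary point of the problem, i.e., $0\in\nabla\varphi(\bar w)+\mathcal N^{\lim}_D(\bar w)$, and $\gamma_j(w^{j+1}-w^j)\to0$ as $j\to\infty$, $j\in K$.
   Context: $\mathbb W$ is a Euclidean space, $\varphi\colon\mathbb W\to\mathbb R$ continuously differentiable, $D\subset\mathbb W$ nonempty and closed (neither need be convex). The limiting normal cone at $\bar w\in D$ is $\mathcal N^{\lim}_D(\bar w):=\limsup_{w\to\bar w}\operatorname{cone}(w-\Pi_D(w))$ (outer set limit, $\Pi_D$ the multivalued Euclidean projection onto $D$). Algorithm 1 (general spectral gradient method, without termination test): parameters $\tau>1$, $\sigma\in(0,1)$, $0<\gamma_{\min}\le\gamma_{\max}<\infty$, $m\in\mathbb N$, starting point $w^0\in D$. For $j=0,1,2,\dots$: set $m_j:=\min(j,m)$ and choose $\gamma_j^0\in[\gamma_{\min},\gamma_{\max}]$; for $i=1,2,\dots$ set $\gamma_{j,i}:=\tau^{i-1}\gamma_j^0$ and compute a (global) solution $w^{j,i}$ of $\min_w \varphi(w^j)+\langle\nabla\varphi(w^j),w-w^j\rangle+\frac{\gamma_{j,i}}2\|w-w^j\|^2$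 s.t. $w\in D$ (subproblem $Q(j,i)$); the inner loop stops at the first $i$ with $\varphi(w^{j,i})\le\max_{r=0,\dots,m_j}\varphi(w^{j-r})+\sigma\langle\nabla\varphi(w^j),w^{j,i}-w^j\rangle$; then set $i_j:=i$, $\gamma_j:=\gamma_{j,i_j}$, $w^{j+1}:=w^{j,i_j}$. *)

From HB Require Import structures.
From mathcomp Require Import all_boot all_order all_algebra.
From mathcomp Require Import all_classical all_reals all_analysis.
Set Implicit Arguments. Unset Strict Implicit. Unset Printing Implicit Defensive.
Import Order.TTheory GRing.Theory Num.Theory.
Import numFieldNormedType.Exports.
Local Open Scope classical_set_scope.
Local Open Scope ring_scope.

Section Defs.
Variables (R : realType) (n : nat).
Notation W := 'rV[R]_n.

Definition dotp (u v : W) : R := \sum_(i < n) u ord0 i * v ord0 i.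
Definition enorm (u : W) : R := Num.sqrt (dotp u u).

Definition proj_set (D : set W) (w : W) : set W :=
  [set p | D p /\ forall d, D d -> enorm (w - p) <= enorm (w - d)].

Definition cone (S : set W) : set W :=
  [set v | exists t s, 0 <= t /\ S s /\ v = t *: s].

(* limiting normal cone: outer (Painleve-Kuratowski) limit of
   cone(w - Pi_D(w)) as w -> wbar *)
Definition lim_normal_cone (D : set W) (wbar : W) : set W :=
  [set v | exists (wk vk : nat -> W),
     wk @ \oo --> wbar /\ vk @ \oo --> v /\
     forall k, cone [set wk k - p | p in proj_set D (wk k)] (vk k)].

Definition Qobj (phi : W -> R) (g : W -> W) (wj : W) (gam : R) (w : W) : R :=
  phi wj + dotp (g wj) (w - wj) + gam / 2 * enorm (w - wj) ^+ 2.

Definition is_Qsol (D : set W) (phi : W -> R) (g : W -> W) (wj : W) (gam : R)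
  (w : W) : Prop :=
  D w /\ forall v, D v -> Qobj phi g wj gam w <= Qobj phi g wj gam v.

Definition ref_val (phi : W -> R) (w : nat -> W) (m j : nat) : R :=
  \big[Num.max/phi (w j)]_(r < (minn j m).+1) phi (w (j - r)%N).

Definition accept (phi : W -> R) (g : W -> W) (sigma : R) (w : nat -> W)
  (m j : nat) (wji : W) : Prop :=
  phi wji <= ref_val phi w m j + sigma * dotp (g (w j)) (wji - w j).

(* A run of Algorithm 1 whose inner loops all terminate:
   w = outer iterates, gamma0 j = gamma_j^0, winner j i = w^{j,i},
   it j = i_j, gamma j = gamma_j. *)
Definition SG_run (D : set W) (phi : W -> R) (g : W -> W)
  (tau sigma gmin gmax : R) (m : nat) (w0 : W)
  (w : nat -> W) (gamma0 : nat -> R) (winner : nat -> nat -> W)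
  (it : nat -> nat) (gamma : nat -> R) : Prop :=
  w 0%N = w0 /\
  forall j : nat,
    [/\ gmin <= gamma0 j <= gmax,
        (0 < it j)%N,
        (forall i, (0 < i <= it j)%N ->
           is_Qsol D phi g (w j) (tau ^+ i.-1 * gamma0 j) (winner j i)),
        (forall i, (0 < i < it j)%N ->
           ~ accept phi g sigma w m j (winner j i))
      & [/\ accept phi g sigma w m j (winner j (it j)),
            gamma j = tau ^+ (it j).-1 * gamma0 j
          & w j.+1 = winner j (it j)]].

End Defs.

(* An accepted step decreases phi below the nonmonotone reference value
   [max_{r <= m} phi (w^{j-r})] by [sigma * gamma_j / 2 * |w^{j+1} - w^j|^2], so
   the reference values decrease to a limit [L]; uniform continuity of phi on the
   level set propagates [L] back to phi (w^j) itself (the argument of Grippo,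
   Lampariello and Lucidi), whence [gamma_j |w^{j+1} - w^j|^2 -> 0].  Along the
   subsequence either [gamma_j] stays bounded, and [gamma_j |w^{j+1} - w^j| -> 0]
   follows, or the previous trial with parameter [gamma_j / tau] was rejected:
   that trial step has length [O(|grad phi (w^j)| / gamma_j)], and by the mean
   value theorem its rejection forces the gradient to vary along it by a multiple
   of [gamma_j |w^{j+1} - w^j|], which is small by continuity of the gradient at
   [wbar].  Finally [w^{j+1}] is a projection onto [D] of
   [w^j - grad phi (w^j) / gamma_j], so
   [gamma_j (w^j - w^{j+1}) - grad phi (w^j)] is a proximal normal to [D] at
   [w^{j+1}], and in the limit [- grad phi wbar] is a limiting normal at [wbar]. *)

From HB Require Import structures.
From mathcomp Require Import all_boot all_order all_algebra.
From mathcomp Require Import all_classical all_reals all_analysis.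
From mathcomp Require Import zify ring lra.
Set Implicit Arguments.
Unset Strict Implicit.
Unset Printing Implicit Defensive.
Import Order.TTheory GRing.Theory Num.Theory.
Import numFieldNormedType.Exports.
Local Open Scope classical_set_scope.
Local Open Scope ring_scope.

Section Euclidean.
Context {R : realType} {n : nat}.
Implicit Types u v w : 'rV[R]_n.

Lemma dotpC u v : dotp u v = dotp v u.
Proof. by apply: eq_bigr => i _; rewrite mulrC. Qed.

Lemma dotpDl u v w : dotp (u + v) w = dotp u w + dotp v w.
Proof. by rewrite /dotp -big_split; apply: eq_bigr => i _; rewrite !mxE mulrDl. Qed.

Lemma dotpNl u w : dotp (- u) w = - dotp u w.
Proof. by rewrite /dotp -sumrN; apply: eq_bigr => i _; rewrite !mxE mulNr. Qed.

Lemma dotpZl a u w : dotp (a *: u) w = a * dotp u w.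
Proof. by rewrite /dotp mulr_sumr; apply: eq_bigr => i _; rewrite !mxE mulrA. Qed.

Lemma dotpBl u v w : dotp (u - v) w = dotp u w - dotp v w.
Proof. by rewrite dotpDl dotpNl. Qed.

Lemma dotpBr u v w : dotp w (u - v) = dotp w u - dotp w v.
Proof. by rewrite !(dotpC w) dotpBl. Qed.

Lemma dotpZr a u w : dotp w (a *: u) = a * dotp w u.
Proof. by rewrite !(dotpC w) dotpZl. Qed.

Lemma dotp0r u : dotp u 0 = 0.
Proof. by rewrite /dotp big1 // => i _; rewrite mxE mulr0. Qed.

Lemma dotpNN u : dotp (- u) (- u) = dotp u u.
Proof. by rewrite dotpNl (dotpC u) dotpNl opprK. Qed.

Lemma dotpp_ge0 u : 0 <= dotp u u.
Proof. by apply: sumr_ge0 => i _; rewrite -expr2 sqr_ge0. Qed.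

Lemma enorm_sqr u : enorm u ^+ 2 = dotp u u.
Proof. by rewrite /enorm sqr_sqrtr // dotpp_ge0. Qed.

(* [`|u|] is the sup norm of MathComp's normed structure on row vectors *)
Lemma normr_dotp_le u v : `|dotp u v| <= n%:R * (`|u| * `|v|).
Proof.
have coord_le (x : 'rV[R]_n) i : `|x ord0 i| <= `|x|.
  rewrite [`|x|]mx_normrE.
  exact: (le_bigmax _ (fun ij : 'I_1 * 'I_n => `|x ij.1 ij.2|) (ord0, i)).
rewrite /dotp (le_trans (ler_norm_sum _ _ _)) //.
rewrite mulr_natl -[n in _ *+ n]card_ord -sumr_const; apply: ler_sum => i _ /=.
by rewrite normrM ler_pM ?coord_le.
Qed.

Lemma sqr_normr_le_dotp u : `|u| ^+ 2 <= dotp u u.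
Proof.
have -> : `|u| = mx_norm u by [].
have [/eqP ->|/mx_norm_neq0 [[a i] ->]] := boolP (mx_norm u == 0).
  by rewrite expr0n dotpp_ge0.
rewrite /= (ord1 a) real_normK ?num_real // /dotp (bigD1 i) //= -expr2 lerDl.
by apply: sumr_ge0 => k _; rewrite -expr2 sqr_ge0.
Qed.

Lemma normr_le_of_dotp_le u v :
  dotp u u <= dotp v v -> `|u| <= n%:R * `|v|.
Proof.
move=> uv; rewrite -(ler_pXn2r (_ : 0 < 2)%N) ?nnegrE ?mulr_ge0 //.
apply: le_trans (sqr_normr_le_dotp u) (le_trans uv _).
apply: le_trans (ler_norm _) (le_trans (normr_dotp_le v v) _).
rewrite exprMn -expr2 ler_wpM2r ?exprn_ge0 // -natrX ler_nat.
by case: (n) => // k; rewrite leq_pmulr.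
Qed.

End Euclidean.

Lemma dotp_mean_value {R : realType} {n : nat}
    (phi : 'rV[R]_n -> R) (g : 'rV[R]_n -> 'rV[R]_n) (x v : 'rV[R]_n) :
  (forall x, differentiable phi x) -> (forall x h, 'd phi x h = dotp (g x) h) ->
  exists2 t, 0 <= t <= 1 & phi (x + v) - phi x = dotp (g (x + t *: v)) v.
Proof.
move=> dphi gphi; pose f s := phi (x + s *: v).
have quotE s : (fun h : R => h^-1 *: ((f \o shift s) (h *: 1) - f s)) =
    (fun h => h^-1 *: ((phi \o shift (x + s *: v)) (h *: v) - phi (x + s *: v))).
  apply: funext => h /=; rewrite /f /=; congr (_ *: (phi _ - _)).
  have -> : (h%:A : R) = h by rewrite [LHS]mulr1.
  by rewrite /shift /= scalerDl addrCA.
have f_derive s : is_derive s (1 : R) f (dotp (g (x + s *: v)) v).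
  have dv : derivable phi (x + s *: v) v by apply: diff_derivable.
  have df : derivable f s 1 by rewrite /derivable quotE.
  apply: DeriveDef => //.
  transitivity (derive phi (x + s *: v) v); first by rewrite /derive quotE.
  by rewrite deriveE // gphi.
have f_cont : {within `[0, 1], continuous f}.
  apply: continuous_subspaceT => y; apply: differentiable_continuous.
  by apply/derivable1_diffP; exact: (@ex_derive _ _ _ _ _ _ _ (f_derive y)).
have [t t01 ft] := MVT_segment ler01 (fun s _ => f_derive s) f_cont.
exists t; first by move: t01; rewrite in_itv.
by move: ft; rewrite /f scale0r addr0 scale1r subr0 mulr1.
Qed.

Section Subproblem.
Context {R : realType} {n : nat} (D : set 'rV[R]_n).
Context (phi : 'rV[R]_n -> R) (g : 'rV[R]_n -> 'rV[R]_n).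
Implicit Types (x p q d : 'rV[R]_n) (ga : R).
Local Notation Qsol := (is_Qsol D phi g).
Local Notation model x ga p := (dotp (g x) (p - x) + ga / 2 * dotp (p - x) (p - x)).

Lemma QobjE x ga p : Qobj phi g x ga p = phi x + model x ga p.
Proof. by rewrite /Qobj enorm_sqr addrA. Qed.

Lemma Qsol_le x ga p q : Qsol x ga p -> D q -> model x ga p <= model x ga q.
Proof. by case=> _ p_opt Dq; have := p_opt q Dq; rewrite !QobjE lerD2l. Qed.

Lemma Qsol_model_le0 x ga p : D x -> Qsol x ga p -> model x ga p <= 0.
Proof. by move=> Dx /Qsol_le /(_ Dx); rewrite subrr !dotp0r mulr0 addr0. Qed.

Lemma Qsol_step_antitone x ga ga' p p' : ga' < ga -> Qsol x ga p -> Qsol x ga' p' ->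
  dotp (p - x) (p - x) <= dotp (p' - x) (p' - x).
Proof.
move=> ga'_lt solp solp'; have := Qsol_le solp solp'.1; have := Qsol_le solp' solp.1.
move: ga'_lt; rewrite -subr_gt0; nra.
Qed.

Lemma Qsol_variational x ga p d : 0 < ga -> Qsol x ga p -> D d ->
  2 * dotp (x - ga^-1 *: g x - p) (d - p) <= dotp (d - p) (d - p).
Proof.
move=> ga_gt0 solp Dd; have := Qsol_le solp Dd.
have -> : d - p = (d - x) - (p - x) by rewrite opprB addrA subrK.
have -> : x - ga^-1 *: g x - p = - (ga^-1 *: g x) - (p - x).
  by rewrite opprB addrA [- _ + x]addrC.
move: (p - x) (d - x) => P Q le_model.
have {}le_model : ga^-1 * (dotp (g x) P + ga / 2 * dotp P P) <=
    ga^-1 * (dotp (g x) Q + ga / 2 * dotp Q Q).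
  by rewrite ler_wpM2l // invr_ge0 ltW.
rewrite !mulrDr !mulrA mulVf ?gt_eqF // mul1r in le_model.
rewrite !(dotpBl, dotpBr, dotpNl, dotpZl) (dotpC Q P); lra.
Qed.

Lemma proj_set_segment p a t : D p -> 0 < t <= 1 ->
  (forall d, D d -> 2 * dotp a (d - p) <= dotp (d - p) (d - p)) ->
  proj_set D (p + t *: a) p.
Proof.
move=> Dp /andP[t_gt0 t_le1] var_ineq; split=> // d Dd.
have -> : p + t *: a - p = t *: a by rewrite addrC addKr.
have -> : p + t *: a - d = t *: a - (d - p) by rewrite opprB addrA [p + _]addrC.
rewrite /enorm ler_sqrt ?dotpp_ge0 //.
have := var_ineq d Dd; move: (d - p) => b ab_le.
rewrite !(dotpBl, dotpBr, dotpZl, dotpZr) (dotpC b a).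
have bb := dotpp_ge0 b.
have : 0 <= (1 - t) * dotp b b by rewrite mulr_ge0 ?subr_ge0.
have : 0 <= t * (dotp b b - 2 * dotp a b) by rewrite mulr_ge0 ?subr_ge0 // ltW.
lra.
Qed.

(* The subproblem minimizes [ga/2 |w - (x - g x / ga)|^2] over [D], and a
   nearest point stays nearest along the segment towards the projected point. *)
Lemma Qsol_proj x ga p t : 0 < ga -> 0 < t <= 1 -> Qsol x ga p ->
  proj_set D (p + t *: (x - ga^-1 *: g x - p)) p.
Proof.
move=> ga_gt0 t01 solp; apply: proj_set_segment solp.1 t01 _ => d.
exact: Qsol_variational.
Qed.

Lemma Qsol_normr_step_le x ga p : D x -> 0 <= ga -> Qsol x ga p ->
  ga * `|p - x| <= 2 * n%:R * `|g x|.
Proof.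
move=> Dx ga_ge0 solp; have := Qsol_model_le0 Dx solp; set h := p - x => model_le0.
have gh_le : - dotp (g x) h <= n%:R * (`|g x| * `|h|).
  by apply: le_trans (normr_dotp_le _ _); rewrite -normrN ler_norm.
have sup_le : ga / 2 * `|h| ^+ 2 <= ga / 2 * dotp h h.
  by rewrite ler_wpM2l ?sqr_normr_le_dotp // divr_ge0.
have [->|h_neq0] := eqVneq `|h| 0; first by rewrite mulr0 !mulr_ge0.
have h_gt0 : 0 < `|h| by rewrite lt_def h_neq0 normr_ge0.
rewrite -(ler_pM2r h_gt0); move: sup_le; rewrite expr2; nra.
Qed.

Lemma Qsol_rejected x ga p sigma rho :
  (forall x, differentiable phi x) -> (forall x h, 'd phi x h = dotp (g x) h) ->
  D x -> 0 <= ga -> sigma <= 1 -> Qsol x ga p ->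
  phi x <= rho -> rho + sigma * dotp (g x) (p - x) < phi p ->
  exists2 t, 0 <= t <= 1 &
    (1 - sigma) * (ga * `|p - x|) < 2 * n%:R * `|g (x + t *: (p - x)) - g x|.
Proof.
move=> dphi gphi Dx ga_ge0 sigma_le1 solp phix_le rejected.
have := dotp_mean_value x (p - x) dphi gphi.
rewrite [x + (p - x)]addrC subrK => -[t t01 mvt]; exists t => //.
have := Qsol_model_le0 Dx solp; set h := p - x in mvt * => model_le0.
set xi := x + t *: h in mvt *.
have dg_le : dotp (g xi - g x) h <= n%:R * (`|g xi - g x| * `|h|).
  exact: le_trans (ler_norm _) (normr_dotp_le _ _).
rewrite dotpBl in dg_le.
have sup_le : ga / 2 * `|h| ^+ 2 <= ga / 2 * dotp h h.
  by rewrite ler_wpM2l ?sqr_normr_le_dotp // divr_ge0.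
have sigma' : 0 <= 1 - sigma by rewrite subr_ge0.
have key : (1 - sigma) * (ga / 2 * `|h| ^+ 2) < n%:R * (`|g xi - g x| * `|h|) by nra.
have [h0|h_neq0] := eqVneq `|h| 0.
  by move: key; rewrite h0 expr0n /= !mulr0 ltxx.
have h_gt0 : 0 < `|h| by rewrite lt_def h_neq0 normr_ge0.
by rewrite -(ltr_pM2r h_gt0); move: key; rewrite expr2; nra.
Qed.

Lemma lim_normal_cone_Qsol (x p : nat -> 'rV[R]_n) (ga : nat -> R) (wbar : 'rV[R]_n) :
  continuous g -> (forall l, 0 < ga l) -> (forall l, Qsol (x l) (ga l) (p l)) ->
  x @ \oo --> wbar -> p @ \oo --> wbar ->
  (fun l => ga l *: (p l - x l)) @ \oo --> (0 : 'rV[R]_n) ->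
  lim_normal_cone D wbar (- g wbar).
Proof.
move=> g_cont ga_gt0 solp x_cvg p_cvg scaled_step_cvg.
pose a l : 'rV[R]_n := x l - (ga l)^-1 *: g (x l) - p l.
(* Shrinking the segment keeps [p l] a projection of [p l + t l *: a l], while
   these base points now converge to [wbar]. *)
pose t l : R := ((l.+1)%:R * (`|a l| + 1))^-1.
have t_gt0 l : 0 < t l by rewrite invr_gt0 mulr_gt0 // ltr_pwDr.
have t_le1 l : t l <= 1.
  by rewrite invf_le1 ?mulr_gt0 ?ltr_pwDr // mulr_ege1 ?ler1n ?lerDr.
have ta_le l : `|t l *: a l| <= harmonic l.
  rewrite normrZ gtr0_norm // /t invfM -mulrA /=.
  apply: ler_piMr; first by rewrite invr_ge0.
  by rewrite mulrC ler_pdivrMr ?ltr_pwDr // mul1r lerDl.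
exists (fun l => p l + t l *: a l), (fun l => ga l *: (x l - p l) - g (x l)).
split; [|split].
- rewrite -[wbar]addr0; apply: cvgD p_cvg _; apply/cvgr0Pnorm_lt => e e_gt0.
  have /cvgr0Pnorm_lt/(_ e e_gt0) := @cvg_harmonic R; apply: filterS => l.
  by rewrite ger0_norm ?harmonic_ge0 //; exact: le_lt_trans (ta_le l).
- have -> : (fun l => ga l *: (x l - p l) - g (x l)) =
      - (fun l => ga l *: (p l - x l)) - (g \o x).
    by apply/funext => l; rewrite !fctE /= -scalerN opprB.
  rewrite -[- g wbar]sub0r -{1}oppr0.
  exact: cvgB (cvgN scaled_step_cvg) (continuous_cvg _ (g_cont wbar) x_cvg).
- move=> l; exists (ga l / t l), (t l *: a l); split; first by rewrite ltW ?divr_gt0.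
  split.
    exists (p l); last by rewrite addrC addKr.
    by apply: Qsol_proj (ga_gt0 l) _ (solp l); rewrite t_gt0 t_le1.
  have scale_back (c s : R) (u v : 'rV[R]_n) : c != 0 -> s != 0 ->
      (c / s) *: (s *: (u - c^-1 *: v)) = c *: u - v.
    by move=> c0 s0; rewrite scalerA divfK // scalerBr scalerA mulfV // scale1r.
  by rewrite /a addrAC scale_back ?gt_eqF.
Qed.

End Subproblem.

Section Algorithm.
Variables (R : realType) (n : nat) (phi : 'rV[R]_n -> R) (g : 'rV[R]_n -> 'rV[R]_n).
Variables (D : set 'rV[R]_n) (tau sigma gmin gmax : R) (m : nat) (w0 : 'rV[R]_n).
Variables (w : nat -> 'rV[R]_n) (gamma0 : nat -> R) (winner : nat -> nat -> 'rV[R]_n).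
Variables (it : nat -> nat) (gamma : nat -> R).
Hypothesis tau_gt1 : 1 < tau.
Hypothesis sigma01 : 0 < sigma < 1.
Hypothesis gmin_gt0 : 0 < gmin.
Hypothesis D_w0 : D w0.
Hypothesis run : SG_run D phi g tau sigma gmin gmax m w0 w gamma0 winner it gamma.

Local Notation r := (ref_val phi w m).
Local Notation step j := (w j.+1 - w j).
Local Notation Qsol := (is_Qsol D phi g).

Lemma gamma0_bounds j : gmin <= gamma0 j <= gmax.
Proof. by case: (run.2 j). Qed.

Lemma it_gt0 j : (0 < it j)%N.
Proof. by case: (run.2 j). Qed.

Lemma winner_Qsol j i : (0 < i <= it j)%N ->
  Qsol (w j) (tau ^+ i.-1 * gamma0 j) (winner j i).
Proof. by case: (run.2 j) => _ _ + _ _; apply. Qed.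

Lemma winner_rejected j i : (0 < i < it j)%N -> ~ accept phi g sigma w m j (winner j i).
Proof. by case: (run.2 j) => _ _ _ + _; apply. Qed.

Lemma iterate_accepted j : accept phi g sigma w m j (w j.+1).
Proof. by case: (run.2 j) => _ _ _ _ [+ _ ->]. Qed.

Lemma gammaE j : gamma j = tau ^+ (it j).-1 * gamma0 j.
Proof. by case: (run.2 j) => _ _ _ _ []. Qed.

Lemma iterateS j : w j.+1 = winner j (it j).
Proof. by case: (run.2 j) => _ _ _ _ []. Qed.

Lemma trial_ge_gamma0 j k : gamma0 j <= tau ^+ k * gamma0 j.
Proof.
have /andP[gmin_le _] := gamma0_bounds j.
by rewrite ler_peMl ?exprn_ege1 ?ltW // (lt_le_trans gmin_gt0).
Qed.

Lemma trial_gt0 j k : 0 < tau ^+ k * gamma0 j.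
Proof.
have /andP[gmin_le _] := gamma0_bounds j.
exact: lt_le_trans gmin_gt0 (le_trans gmin_le (trial_ge_gamma0 j k)).
Qed.

Lemma gamma_ge_gmin j : gmin <= gamma j.
Proof.
have /andP[gmin_le _] := gamma0_bounds j.
by rewrite gammaE (le_trans gmin_le) ?trial_ge_gamma0.
Qed.

Lemma gamma_gt0 j : 0 < gamma j.
Proof. exact: lt_le_trans gmin_gt0 (gamma_ge_gmin j). Qed.

Lemma iterate_Qsol j : Qsol (w j) (gamma j) (w j.+1).
Proof. by rewrite iterateS gammaE; apply: winner_Qsol; rewrite it_gt0 leqnn. Qed.

Lemma D_iterate j : D (w j).
Proof. by case: j => [|j]; [rewrite run.1 | exact: (iterate_Qsol j).1]. Qed.

Lemma descent j :
  phi (w j.+1) <= r j - sigma * gamma j / 2 * dotp (step j) (step j).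
Proof.
apply: le_trans (iterate_accepted j) _; rewrite lerD2l.
have := Qsol_model_le0 (D_iterate j) (iterate_Qsol j).
rewrite -oppr_ge0 => model_le; case/andP: sigma01 => sigma_gt0 _.
have := mulr_ge0 (ltW sigma_gt0) model_le; lra.
Qed.

Lemma iterateS_le_ref_val j : phi (w j.+1) <= r j.
Proof.
apply: le_trans (descent j) _; rewrite gerBl mulr_ge0 ?dotpp_ge0 //.
by case/andP: sigma01 => sigma_gt0 _; rewrite !mulr_ge0 ?ltW ?gamma_gt0.
Qed.

Lemma ref_val_attained j : exists2 k, (j - minn j m <= k <= j)%N & r j = phi (w k).
Proof.
apply: (big_ind (fun y => exists2 k, (j - minn j m <= k <= j)%N & y = phi (w k))).
- by exists j; rewrite ?leqnn ?leq_subr.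
- move=> _ _ [k1 k1_in ->] [k2 k2_in ->].
  by case: (leP (phi (w k1)) (phi (w k2))); [exists k2 | exists k1].
- move=> i _; exists (j - i)%N => //.
  by rewrite leq_sub2l ?leq_subr // -ltnS.
Qed.

Lemma ref_val_ge j k : (j - minn j m <= k <= j)%N -> phi (w k) <= r j.
Proof.
move=> /andP[k_ge k_le]; have i_lt : (j - k < (minn j m).+1)%N by lia.
have := le_bigmax (phi (w j)) (fun i : 'I_(minn j m).+1 => phi (w (j - i)%N)) (Ordinal i_lt).
by rewrite /= subKn.
Qed.

Lemma phi_le_ref_val j : phi (w j) <= r j.
Proof. by rewrite ref_val_ge // leqnn leq_subr. Qed.

Lemma ref_val_nonincreasing : nonincreasing_seq r.
Proof.
apply/nonincreasing_seqP => j; have [k k_in ->] := ref_val_attained j.+1.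
have [->|k_neq] := eqVneq k j.+1; first exact: iterateS_le_ref_val.
by apply: ref_val_ge; lia.
Qed.

Lemma phi_iterate_le j : phi (w j) <= phi w0.
Proof.
apply: le_trans (phi_le_ref_val j) (le_trans (ref_val_nonincreasing (leq0n j)) _).
have [k] := ref_val_attained 0; rewrite sub0n leqn0 => /eqP -> ->.
by rewrite run.1.
Qed.

Hypothesis phi_lbounded : exists lb, forall x, D x -> phi x <= phi w0 -> lb <= phi x.
Hypothesis phi_ucont : forall eps, 0 < eps -> exists2 delta, 0 < delta &
  forall x y, D x -> phi x <= phi w0 -> D y -> phi y <= phi w0 ->
    enorm (x - y) < delta -> `|phi x - phi y| < eps.

Definition ref_lim := inf (range r).

Lemma ref_val_lbounded : has_lbound (range r).
Proof.
have [lb lb_le] := phi_lbounded; exists lb => _ [j _ <-].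
exact: le_trans (lb_le _ (D_iterate j) (phi_iterate_le j)) (phi_le_ref_val j).
Qed.

Lemma ref_val_cvg : r @ \oo --> ref_lim.
Proof. exact: nonincreasing_cvgn ref_val_nonincreasing ref_val_lbounded. Qed.

Lemma sqr_step_le_ref_gap j :
  sigma * gmin / 2 * dotp (step j) (step j) <= r j - phi (w j.+1).
Proof.
case/andP: sigma01 => sigma_gt0 _.
have coef_le : sigma * gmin / 2 <= sigma * gamma j / 2.
  by rewrite ler_pM2r ?invr_gt0 // ler_pM2l ?gamma_ge_gmin.
have := ler_wpM2r (dotpp_ge0 (step j)) coef_le; have := descent j; lra.
Qed.

Lemma phi_pred_near e : 0 < e -> exists2 eta, 0 < eta & exists N, forall i, (N <= i)%N ->
  `|phi (w i.+1) - ref_lim| < eta -> `|phi (w i) - ref_lim| < e.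
Proof.
move=> e_gt0; case/andP: sigma01 => sigma_gt0 _.
have c_gt0 : 0 < sigma * gmin / 2 by rewrite divr_gt0 ?mulr_gt0.
have [delta delta_gt0 phi_close] := phi_ucont (divr_gt0 e_gt0 (ltr0n _ 2)).
have eta_gt0 : 0 < sigma * gmin / 2 * delta ^+ 2 / 2 by rewrite !divr_gt0 ?mulr_gt0.
have /cvgrPdist_lt/(_ _ eta_gt0) [N _ ref_near] := ref_val_cvg.
exists (Num.min (e / 2) (sigma * gmin / 2 * delta ^+ 2 / 2)).
  by rewrite lt_min eta_gt0 divr_gt0.
exists N => i /ref_near/=; rewrite distrC ltr_distl => /andP[_ ref_i].
rewrite lt_min => /andP[phiS_near_e phiS_near].
move: phiS_near; rewrite ltr_distl => /andP[phiS_i _].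
have step_small : enorm (w i - w i.+1) < delta.
  rewrite /enorm -opprB dotpNN -(ger0_norm (ltW delta_gt0)) -sqrtr_sqr.
  rewrite ltr_sqrt ?exprn_gt0 // -(ltr_pM2l c_gt0).
  have := sqr_step_le_ref_gap i; lra.
have := phi_close _ _ (D_iterate i) (phi_iterate_le i) (D_iterate i.+1)
  (phi_iterate_le i.+1) step_small.
move=> phi_i; rewrite (splitr e); apply: le_lt_trans (ler_distD (phi (w i.+1)) _ _) _.
exact: ltrD.
Qed.

Lemma phi_ref_index_near k e : 0 < e -> exists N, forall j p i, (N <= j)%N ->
  (j - minn j m <= p <= j)%N -> r j = phi (w p) -> (i <= k)%N ->
  `|phi (w (p - i)) - ref_lim| < e.
Proof.
elim: k e => [|k IH] e e_gt0.
  have /cvgrPdist_lt/(_ _ e_gt0) [N _ ref_near] := ref_val_cvg.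
  exists N => j p i /ref_near/= ref_j _ rjp; rewrite leqn0 => /eqP ->.
  by rewrite subn0 -rjp distrC.
have [eta eta_gt0 [N1 pred_near]] := phi_pred_near e_gt0.
have min_gt0 : 0 < Num.min eta e by rewrite lt_min eta_gt0.
have [N0 index_near] := IH _ min_gt0.
exists (N0 + N1 + m + k + 1)%N => j p i j_ge p_in rjp i_le.
have N0_le : (N0 <= j)%N by lia.
have [i_le_k|i_gt_k] := leqP i k.
  by have := index_near j p i N0_le p_in rjp i_le_k; rewrite lt_min => /andP[].
have -> : i = k.+1 by lia.
case/andP: p_in (p_in) => p_ge _ p_in.
apply: pred_near; first by lia.
have -> : (p - k.+1).+1 = (p - k)%N by lia.
by have := index_near j p k N0_le p_in rjp (leqnn k); rewrite lt_min => /andP[].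
Qed.

Lemma phi_iterate_cvg : (fun j => phi (w j)) @ \oo --> ref_lim.
Proof.
apply/cvgrPdistC_lt => e e_gt0; have [N index_near] := phi_ref_index_near m e_gt0.
exists N => // j /= j_ge; have [p p_in rp] := ref_val_attained (j + m).
case/andP: p_in (p_in) => p_ge p_le p_in.
have -> : j = (p - (p - j))%N by lia.
by apply: index_near rp _ => //; lia.
Qed.

Lemma scaled_sqr_step_cvg0 : (fun j => gamma j * dotp (step j) (step j)) @ \oo --> 0.
Proof.
case/andP: sigma01 => sigma_gt0 _.
have phiS_cvg : (fun j => phi (w j.+1)) @ \oo --> ref_lim.
  by have := phi_iterate_cvg; rewrite -cvg_shiftS.
have gap_cvg : (fun j => 2 / sigma * (r j - phi (w j.+1))) @ \oo --> 0.
  apply: cvg_trans (cvgM (cvg_cst (2 / sigma)) (cvgB ref_val_cvg phiS_cvg)) _.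
  by rewrite subrr mulr0.
apply: (squeeze_cvgr _ (cvg_cst 0) gap_cvg); near=> j; apply/andP; split => /=.
  by rewrite mulr_ge0 ?dotpp_ge0 ?ltW ?gamma_gt0.
have -> : gamma j * dotp (step j) (step j) =
    2 / sigma * (sigma * gamma j / 2 * dotp (step j) (step j)).
  by field; rewrite gt_eqF.
apply: ler_wpM2l; first by rewrite divr_ge0 ?ltW.
by have := descent j; lra.
Unshelve. all: by end_near.
Qed.

Hypothesis phi_diff : forall x, differentiable phi x.
Hypothesis phi_grad : forall x h, 'd phi x h = dotp (g x) h.
Hypothesis g_cont : continuous g.

Section Backtracking.
Variable j : nat.
Hypothesis backtracked : (1 < it j)%N.
Let ghat := tau ^+ (it j).-2 * gamma0 j.
Let trial := winner j (it j).-1.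

Lemma gamma_backtracked : gamma j = tau * ghat.
Proof. by rewrite gammaE /ghat mulrA -exprS; congr (_ ^+ _ * _); lia. Qed.

Lemma trial_Qsol : Qsol (w j) ghat trial.
Proof. by apply: winner_Qsol; lia. Qed.

Lemma trial_step_le : gamma j * `|trial - w j| <= 2 * n%:R * tau * `|g (w j)|.
Proof.
have := Qsol_normr_step_le (D_iterate j) (ltW (trial_gt0 _ _)) trial_Qsol.
move=> /(ler_wpM2l (ltW (lt_trans ltr01 tau_gt1))).
by rewrite gamma_backtracked /ghat; lra.
Qed.

Lemma trial_step_lt G eta : 0 < eta -> `|g (w j)| <= G ->
  4 * n.+1%:R * G * tau / eta < gamma j -> `|trial - w j| < eta / 2.
Proof.
move=> eta_gt0 gwj_le gamma_gt; rewrite ltNge; apply/negP => trial_ge.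
have := trial_step_le; have := ler_wpM2l (ltW (gamma_gt0 j)) trial_ge.
have : 4 * n.+1%:R * G * tau / eta * (eta / 2) < gamma j * (eta / 2).
  by rewrite ltr_pM2r ?divr_gt0.
have -> : 4 * n.+1%:R * G * tau / eta * (eta / 2) = 2 * n.+1%:R * G * tau.
  by field; rewrite gt_eqF.
have : n%:R * `|g (w j)| <= n.+1%:R * G by rewrite ler_pM ?ler_nat.
move=> /(ler_wpM2l (mulr_ge0 (ler0n _ 2) (ltW (lt_trans ltr01 tau_gt1)))); lra.
Qed.

Lemma normr_step_le_trial : `|step j| <= n%:R * `|trial - w j|.
Proof.
apply/normr_le_of_dotp_le/(Qsol_step_antitone _ (iterate_Qsol j) trial_Qsol).
by rewrite gamma_backtracked ltr_pMl ?trial_gt0.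
Qed.

Lemma scaled_step_le_dg : exists2 t, 0 <= t <= 1 & (1 - sigma) * (gamma j * `|step j|)
  <= 2 * n%:R ^+ 2 * tau * `|g (w j + t *: (trial - w j)) - g (w j)|.
Proof.
case/andP: sigma01 => _ sigma_lt1.
have rejected : r j + sigma * dotp (g (w j)) (trial - w j) < phi trial.
  rewrite ltNge; apply/negP => accepted.
  by apply: (@winner_rejected j (it j).-1) accepted; lia.
have [t t01 dg_bound] := Qsol_rejected phi_diff phi_grad (D_iterate j)
  (ltW (trial_gt0 _ _)) (ltW sigma_lt1) trial_Qsol (phi_le_ref_val j) rejected.
exists t => //; move: dg_bound; set dg := `|_ - g (w j)| => dg_bound.
have sigma' : 0 <= 1 - sigma by rewrite subr_ge0 ltW.
have := ler_wpM2l (mulr_ge0 sigma' (ltW (gamma_gt0 j))) normr_step_le_trial.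
have := ler_wpM2l (mulr_ge0 (ler0n _ n) (ltW (lt_trans ltr01 tau_gt1))) (ltW dg_bound).
by rewrite gamma_backtracked /ghat; lra.
Qed.

End Backtracking.

Lemma backtracked_of_gt_gmax j : gmax < gamma j -> (1 < it j)%N.
Proof.
rewrite gammaE; case: (it j) (it_gt0 j) => [|[|k]] // _.
by rewrite expr0 mul1r => gmax_lt; have /andP[_] := gamma0_bounds j; lra.
Qed.

Lemma large_gamma_scaled_step_small (wbar : 'rV[R]_n) e : 0 < e ->
  exists2 eta, 0 < eta & exists2 M, gmax <= M & forall j,
    `|wbar - w j| < eta -> M < gamma j -> gamma j * `|step j| < e.
Proof.
move=> e_gt0; case/andP: sigma01 => _ sigma_lt1.
have tau_gt0 : 0 < tau := lt_trans ltr01 tau_gt1.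
pose c : R := n.+1%:R; have c_gt0 : 0 < c by [].
have n_le_c : n%:R <= c by rewrite ler_nat.
pose G := `|g wbar| + 1.
pose rho := (1 - sigma) * e / (2 * c ^+ 2 * tau).
have rho_gt0 : 0 < rho by rewrite divr_gt0 ?mulr_gt0 ?subr_gt0 ?exprn_gt0.
have tol_gt0 : 0 < Num.min 1 (rho / 2) by rewrite lt_min ltr01 divr_gt0.
have /cvgrPdist_lt/(_ _ tol_gt0)/nbhs_ballP[eta eta_gt0 g_near] := @g_cont wbar.
have {}g_near y : `|wbar - y| < eta -> `|g wbar - g y| < Num.min 1 (rho / 2).
  by move=> y_near; apply: g_near; rewrite -ball_normE.
exists (eta / 2); first by rewrite divr_gt0.
exists (Num.max gmax (4 * c * G * tau / eta)); first by rewrite le_max lexx.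
move=> j wj_near; rewrite gt_max => /andP[gmax_lt M_lt].
have backtracked := backtracked_of_gt_gmax gmax_lt.
set dh := winner j (it j).-1 - w j.
have wj_near' : `|wbar - w j| < eta by apply: lt_trans wj_near _; rewrite gtr_pMr ?invf_lt1 ?ltr1n.
have gwj_le : `|g (w j)| <= G.
  have := g_near _ wj_near'; rewrite lt_min => /andP[gwj_near _].
  have := ler_distD (g wbar) 0 (g (w j)); rewrite !sub0r !normrN /G; lra.
have dh_small : `|dh| < eta / 2 := trial_step_lt backtracked eta_gt0 gwj_le M_lt.
have [t /andP[t_ge0 t_le1] step_le] := scaled_step_le_dg backtracked.
have xi_near : `|wbar - (w j + t *: dh)| < eta.
  apply: le_lt_trans (ler_distD (w j) _ _) _.
  rewrite opprD addNKr normrN normrZ ger0_norm // (splitr eta).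
  by apply: ltr_leD wj_near _; apply: le_trans (ltW dh_small); rewrite ler_piMl.
have dg_small : `|g (w j + t *: dh) - g (w j)| < rho.
  apply: le_lt_trans (ler_distD (g wbar) _ _) _; rewrite distrC (splitr rho).
  move: (g_near _ xi_near) (g_near _ wj_near'); rewrite !lt_min => /andP[_ h1] /andP[_ h2].
  exact: ltrD.
have sigma'_gt0 : 0 < 1 - sigma by rewrite subr_gt0.
rewrite -(ltr_pM2l sigma'_gt0); apply: le_lt_trans step_le _.
have -> : (1 - sigma) * e = 2 * c ^+ 2 * tau * rho by rewrite /rho; field; rewrite !gt_eqF.
apply: le_lt_trans (_ : 2 * c ^+ 2 * tau * `|g (w j + t *: dh) - g (w j)| < _).
  apply: ler_wpM2r => //; apply: ler_wpM2r; first exact: ltW.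
  by apply: ler_wpM2l => //; rewrite !expr2 ler_pM.
by rewrite ltr_pM2l ?mulr_gt0 ?exprn_gt0.
Qed.

Lemma bounded_gamma_scaled_step_small M e : 0 < M -> 0 < e ->
  \forall j \near \oo, gamma j <= M -> gamma j * `|step j| < e.
Proof.
move=> M_gt0 e_gt0; have eM_gt0 : 0 < e ^+ 2 / M by rewrite divr_gt0 ?exprn_gt0.
have /cvgr0Pnorm_lt/(_ _ eM_gt0) := scaled_sqr_step_cvg0; apply: filterS => j.
have gamma_ge0 := ltW (gamma_gt0 j).
rewrite ger0_norm ?mulr_ge0 ?dotpp_ge0 // => sqr_small gamma_le.
rewrite -(ltr_pXn2r (_ : 0 < 2)%N) ?nnegrE ?mulr_ge0 ?(ltW e_gt0) //.
have := ler_wpM2l gamma_ge0 (sqr_normr_le_dotp (step j)).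
have := ler_wpM2r (mulr_ge0 gamma_ge0 (dotpp_ge0 (step j))) gamma_le.
have -> : e ^+ 2 = M * (e ^+ 2 / M) by rewrite mulrC divfK ?gt_eqF.
have : M * (gamma j * dotp (step j) (step j)) < M * (e ^+ 2 / M).
  by rewrite ltr_pM2l.
rewrite exprMn; nra.
Qed.

Lemma scaled_step_subseq_cvg0 (K : nat -> nat) (wbar : 'rV[R]_n) :
  (forall l, (K l < K l.+1)%N) -> (fun l => w (K l)) @ \oo --> wbar ->
  (fun l => gamma (K l) *: step (K l)) @ \oo --> (0 : 'rV[R]_n).
Proof.
move=> K_incr wK_cvg; apply/cvgr0Pnorm_lt => e e_gt0.
have [eta eta_gt0 [M gmax_le large]] := large_gamma_scaled_step_small wbar e_gt0.
have M_gt0 : 0 < M.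
  by have /andP[gmin_le gmax_ge] := gamma0_bounds 0; apply: lt_le_trans gmin_gt0 _; lra.
have [N _ bounded] := bounded_gamma_scaled_step_small M_gt0 e_gt0.
have /cvgrPdist_lt/(_ _ eta_gt0) wK_near := wK_cvg.
have K_ge l : (l <= K l)%N by elim: l => // l IH; exact: leq_ltn_trans IH (K_incr l).
near=> l; rewrite normrZ gtr0_norm ?gamma_gt0 //.
have [gamma_le|gamma_gt] := leP (gamma (K l)) M.
  by apply: bounded gamma_le => /=; apply: leq_trans (K_ge l); near: l; exact: nbhs_infty_ge.
by apply: large gamma_gt; near: l.
Unshelve. all: by end_near.
Qed.

Lemma iterateS_subseq_cvg (K : nat -> nat) (wbar : 'rV[R]_n) :
  (fun l => w (K l)) @ \oo --> wbar ->
  (fun l => gamma (K l) *: step (K l)) @ \oo --> (0 : 'rV[R]_n) ->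
  (fun l => w (K l).+1) @ \oo --> wbar.
Proof.
move=> wK_cvg scaled_cvg.
have step_cvg : (fun l => step (K l)) @ \oo --> (0 : 'rV[R]_n).
  apply/cvgr0Pnorm_lt => e e_gt0.
  have /cvgr0Pnorm_lt/(_ _ (mulr_gt0 gmin_gt0 e_gt0)) := scaled_cvg.
  apply: filterS => l; rewrite normrZ gtr0_norm ?gamma_gt0 // => scaled_lt.
  rewrite -(ltr_pM2l gmin_gt0); apply: le_lt_trans scaled_lt.
  by rewrite ler_wpM2r ?gamma_ge_gmin.
have -> : (fun l => w (K l).+1) = (fun l => w (K l)) + (fun l => step (K l)).
  by apply/funext => l; rewrite fctE addrC subrK.
by rewrite -[wbar]addr0; apply: cvgD.
Qed.

End Algorithm.

Theorem mainTheorem5 (R : realType) (n : nat)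
  (phi : 'rV[R]_n -> R) (g : 'rV[R]_n -> 'rV[R]_n) (D : set 'rV[R]_n)
  (tau sigma gmin gmax : R) (m : nat) (w0 : 'rV[R]_n)
  (w : nat -> 'rV[R]_n) (gamma0 : nat -> R)
  (winner : nat -> nat -> 'rV[R]_n) (it : nat -> nat) (gamma : nat -> R)
  (K : nat -> nat) (wbar : 'rV[R]_n) :
  (* phi continuously differentiable with gradient g *)
  (forall x, differentiable phi x) ->
  (forall x h, 'd phi x h = dotp (g x) h) ->
  continuous g ->
  (* D nonempty and closed *)
  D !=set0 -> closed D ->
  (* parameters *)
  1 < tau -> 0 < sigma < 1 -> 0 < gmin -> gmin <= gmax ->
  D w0 ->
  (* {w^j} is produced by Algorithm 1, all inner loops terminating *)
  SG_run D phi g tau sigma gmin gmax m w0 w gamma0 winner it gamma ->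
  (* phi bounded below and uniformly continuous on S_phi(w0) *)
  (exists lb, forall x, D x -> phi x <= phi w0 -> lb <= phi x) ->
  (forall eps, 0 < eps -> exists2 delta, 0 < delta &
     forall x y, D x -> phi x <= phi w0 -> D y -> phi y <= phi w0 ->
       enorm (x - y) < delta -> `|phi x - phi y| < eps) ->
  (* wbar accumulation point along the subsequence K *)
  (forall l, (K l < K l.+1)%N) ->
  (fun l => w (K l)) @ \oo --> wbar ->
  lim_normal_cone D wbar (- g wbar) /\
  (fun l => gamma (K l) *: (w (K l).+1 - w (K l))) @ \oo --> (0 : 'rV[R]_n).
Proof.
move=> phi_diff phi_grad g_cont _ _ tau_gt1 sigma01 gmin_gt0 _ D_w0 run
  phi_lbounded phi_ucont K_incr wK_cvg.
have scaled_step_cvg := scaled_step_subseq_cvg0 tau_gt1 sigma01 gmin_gt0 D_w0 run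
  phi_lbounded phi_ucont phi_diff phi_grad g_cont K_incr wK_cvg.
split=> //; apply: (lim_normal_cone_Qsol g_cont _ _ wK_cvg _ scaled_step_cvg).
- by move=> l; apply: gamma_gt0 tau_gt1 gmin_gt0 run (K l).
- by move=> l; apply: iterate_Qsol run (K l).
- exact: (iterateS_subseq_cvg tau_gt1 gmin_gt0 run wK_cvg scaled_step_cvg).
Qed.
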